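(* For every PICOD hypergraph $\mathcal{H}$, $\beta(\mathcal{H})\ge\eta(\mathcal{H})$, where $\eta(\mathcal{H})$ is the nesting number of $\mathcal{H}$.
   Context: PICOD problem: a server holds $m$ messages $b_1,\dots,b_m\in\mathbb{F}_q$; there are $n$ clients, client $i$ having side-information $\{b_j: j\in S_i\}$, $S_i\subseteq[m]$, and request-set $R_i=[m]\setminus S_i$ (assumed non-empty); client $i$ wants any one message $b_j$ with $j\in R_i$. A PICOD scheme of length $\ell$ over $\mathbb{F}_q$ is an encoding map $\phi:\mathbb{F}_q^m\to\mathbb{F}_q^\ell$ such that for every client $i$ there is an index $j_i\in R_i$ and a function $\psi_i$ with $\psi_i(\phi(b),(b_k)_{k\in S_i})=b_{j_i}$ for all $b\in\mathbb{F}_q^m$. The PICOD hypergraph $\mathcal{H}=(\mathcal{V},\mathcal{E})$ has vertex set $[m]$ and edge set $\{R_i:i\in[n]\}$. $\beta_q(\mathcal{H})$ is the minimum length of a PICOD scheme over $\mathbb{F}_q$, and $\beta(\mathcal{H})=\min_q\beta_q(\mathcal{H})$ over all prime powers $q$. A nested collection of hyperedges of $\mathcal{H}$ of nesting length $L$ is a family $\mathcal{E}_1,\dots,\mathcal{E}_L\subseteq\mathcal{E}$ with $|\mathcal{E}_i|=2^{i-1}$ for each $i\in[L]$, such that for every $i\in[L-1]$ and every $R\in\mathcal{E}_i$ there exist non-empty edges $R',R''\in\mathcal{E}_{i+1}$ with $R'\subsetneq R$, $R''\subsetneq R$ and $R'\cap R''=\emptyset$. The nesting number $\eta(\mathcal{H})$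 is the maximum nesting length of a nested collection of hyperedges of $\mathcal{H}$. *)

From mathcomp Require Import all_boot all_order all_algebra all_field.
Set Implicit Arguments. Unset Strict Implicit. Unset Printing Implicit Defensive.

(* A PICOD problem with m messages and n clients is given by the
   side-information sets S : 'I_n -> {set 'I_m}; client i requests
   R_i = ~: S i. *)

Definition request_set (m n : nat) (S : 'I_n -> {set 'I_m}) (i : 'I_n)
  : {set 'I_m} := ~: S i.

Definition picod_edges (m n : nat) (S : 'I_n -> {set 'I_m})
  : {set {set 'I_m}} := [set request_set S i | i : 'I_n].

(* A PICOD scheme of length l over the finite field F: an (arbitrary)
   encoding map phi : F^m -> F^l such that each client i can decode some
   b_j, j in R_i, from phi(b) and its side information (b_k)_{k in S_i}. *)
Definition is_picod_scheme (F : finFieldType) (m n : nat)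
  (S : 'I_n -> {set 'I_m}) (l : nat)
  (phi : ('I_m -> F) -> ('I_l -> F)) : Prop :=
  forall i : 'I_n,
    exists2 j : 'I_m, j \in request_set S i &
      exists psi : ('I_l -> F) -> ({k : 'I_m | k \in S i} -> F) -> F,
        forall b : 'I_m -> F,
          psi (phi b) (fun k => b (val k)) = b j.

(* A nested collection of hyperedges of nesting length L (levels indexed
   from 0: level t has 2^t edges, t < L). *)
Definition nested_collection (m : nat) (E : {set {set 'I_m}}) (L : nat)
  (Es : nat -> {set {set 'I_m}}) : Prop :=
  (forall t, t < L -> Es t \subset E /\ #|Es t| = 2 ^ t) /\
  (forall t, t.+1 < L -> forall R, R \in Es t ->
     exists R' R'', [/\ R' \in Es t.+1, R'' \in Es t.+1,
        R' != set0, R'' != set0 &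
        [/\ R' \proper R, R'' \proper R & [disjoint R' & R'']]]).

From mathcomp Require Import all_boot all_order all_algebra all_field.
From Stdlib Require Import FunctionalExtensionality.

Set Implicit Arguments.
Unset Strict Implicit.
Unset Printing Implicit Defensive.

(* Walk down a nested collection: at each edge R pick a client c with
   R_c = R and the message j it decodes, then descend to a child of R
   avoiding j (one of the two disjoint children does).  This yields clients
   c_1, ..., c_L decoding distinct messages j_1, ..., j_L, where every later
   j lies in the request set of every earlier client.  Hence any two message
   vectors with the same encoding that agree outside {j_1, ..., j_L} agree
   everywhere: c_1 sees equal side information and so decodes equal j_1,
   then c_2, and so on.  So the encoding is injective on the |F|^L vectors
   supported on {j_1, ..., j_L}, and L <= l. *)

Lemma card_le_of_injective_off (I J F : finType) (M : {set I})
    (g : (I -> F) -> (J -> F)) :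
  1 < #|F| ->
  (forall x y, (forall i, i \notin M -> x i = y i) -> g x = g y -> x =1 y) ->
  #|M| <= #|J|.
Proof.
move=> F_gt1 g_inj; have [x0 _] := card_gt1P F_gt1.
pose g' (f : {ffun I -> F}) : {ffun J -> F} := [ffun j => g f j].
have g'_inj : {in pffun_on x0 M predT &, injective g'}.
  move=> f1 f2 /pffun_onP [supp1 _] /pffun_onP [supp2 _] eq_g'.
  have off_M f : x0.-support f \subset M -> forall i, i \notin M -> f i = x0.
    by move=> /subsetP supp i iM; apply/eqP; apply: contraNT iM => /supp.
  apply/ffunP; apply: g_inj => [i iM|].
    by rewrite (off_M _ supp1) ?(off_M _ supp2).
  by apply: functional_extensionality => j; rewrite -!(ffunE (g _)) -/(g' _) eq_g'.
rewrite -(leq_exp2l _ _ F_gt1) -card_ffun.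
have := max_card (g' @: pffun_on x0 M predT).
by rewrite (card_in_imset g'_inj) card_pffun_on.
Qed.

Section NestedCollection.

Variables (m L : nat) (E : {set {set 'I_m}}) (Es : nat -> {set {set 'I_m}}).
Hypothesis nestedEs : nested_collection E L Es.

Lemma nested_child_avoiding t R j :
  t.+1 < L -> R \in Es t ->
  exists2 R', R' \in Es t.+1 & (R' \subset R) && (j \notin R').
Proof.
case: nestedEs => _ children tL Rt.
have [R' [R'' [R't R''t _ _ [/proper_sub R'R /proper_sub R''R disjR]]]] :=
  children t tL R Rt.
have [jR'|jR'] := boolP (j \in R'); last by exists R'; rewrite ?R'R.
by exists R''; rewrite ?R''R ?(disjointFr disjR jR').
Qed.

Variables (T : eqType) (edge : T -> {set 'I_m}) (msg : T -> 'I_m).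

Definition nests x y := (edge y \subset edge x) && (msg x \notin edge y).

Lemma nests_trans : transitive nests.
Proof.
move=> y x z /andP [yx xy] /andP [zy yz]; rewrite /nests (subset_trans zy yx) /=.
by apply: contra xy; apply/subsetP.
Qed.

Variable P : T -> Prop.
Hypothesis edge_labelled : forall R, R \in E -> exists2 x, edge x = R & P x.

Lemma nested_edge_labelled t R : t < L -> R \in Es t -> exists2 x, edge x = R & P x.
Proof. by move=> tL /(subsetP (nestedEs.1 t tL).1); apply: edge_labelled. Qed.

Lemma nested_path_from k t x :
  t + k < L -> edge x \in Es t ->
  exists s, [/\ size s = k, {in s, forall y, P y} & path nests x s].
Proof.
elim: k t x => [|k IHk] t x tkL xt; first by exists [::].
have tL : t.+1 < L by apply: leq_ltn_trans tkL; rewrite addnS ltnS leq_addr.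
have [R' R't /andP [R'x xR']] := nested_child_avoiding (msg x) tL xt.
have [y edge_y Py] := nested_edge_labelled tL R't.
rewrite -edge_y in R't R'x xR'.
have tkL' : t.+1 + k < L by rewrite addSnnS.
have [s [size_s Ps path_s]] := IHk t.+1 y tkL' R't.
exists (y :: s); split=> /=; first by rewrite size_s.
  by move=> z; rewrite inE => /predU1P [->|/Ps].
by rewrite path_s /nests R'x xR'.
Qed.

Lemma nested_collection_chain :
  exists s, [/\ size s = L, {in s, forall x, P x} & pairwise nests s].
Proof.
have [-> | L_gt0] := posnP L; first by exists [::].
have [R R0] : exists R, R \in Es 0.
  by apply/card_gt0P; rewrite (nestedEs.1 0 L_gt0).2.
have [x edge_x Px] := nested_edge_labelled L_gt0 R0; rewrite -edge_x in R0.
have last_level : 0 + L.-1 < L by rewrite ltn_predL.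
have [s [size_s Ps path_s]] := nested_path_from last_level R0.
exists (x :: s); split; first by rewrite /= size_s prednK.
  by move=> z; rewrite inE => /predU1P [->|/Ps].
by rewrite -(path_pairwise nests_trans).
Qed.

End NestedCollection.

Section DecodingChain.

Variables (m n l : nat) (S : 'I_n -> {set 'I_m}) (F : Type).
Variable phi : ('I_m -> F) -> ('I_l -> F).

Definition decodes (c : 'I_n) (j : 'I_m) : Prop :=
  exists psi : ('I_l -> F) -> ({k : 'I_m | k \in S c} -> F) -> F,
    forall b : 'I_m -> F, psi (phi b) (fun k => b (val k)) = b j.

Definition client_edge (p : 'I_n * 'I_m) := request_set S p.1.

Definition decodes_request (p : 'I_n * 'I_m) :=
  p.2 \in client_edge p /\ decodes p.1 p.2.

Lemma decoding_chain_uniq s :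
  pairwise (nests client_edge snd) s -> {in s, forall p, decodes_request p} ->
  uniq (map snd s).
Proof.
move=> chain reqs; rewrite uniq_pairwise pairwise_map.
apply: (sub_in_pairwise (P := [pred p | p.2 \in client_edge p])) chain.
  by move=> p q _ /= q_req /andP [_]; apply: contraNneq => ->.
by apply/allP => p /reqs [].
Qed.

Lemma decoding_chain_agree s :
  pairwise (nests client_edge snd) s -> {in s, forall p, decodes_request p} ->
  forall x y, (forall k, k \notin map snd s -> x k = y k) -> phi x = phi y -> x =1 y.
Proof.
elim: s => [|[c j] s IHs] chain reqs x y agree eq_phi k; first exact: agree.
move: chain; rewrite pairwise_cons => /andP [/allP head_nests chain].
have [j_req [psi decode_j]] := reqs (c, j) (mem_head _ _).
have reqs_s : {in s, forall p, decodes_request p}.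
  by move=> p p_s; apply: reqs; rewrite inE p_s orbT.
have later_req i : i \in j :: map snd s -> i \in request_set S c.
  case/predU1P=> [->|/mapP [p p_s ->]] //.
  have [sub_c _] := andP (head_nests p p_s).
  by apply: (subsetP sub_c); case: (reqs_s p p_s).
have xy_j : x j = y j.
  rewrite -!decode_j eq_phi; congr (psi _ _); apply: functional_extensionality.
  case=> i /= i_side; apply: agree.
  by apply: contraL i_side => /later_req; rewrite inE.
apply: (IHs chain reqs_s) => // i i_s.
by have [->|ij] := eqVneq i j; last by apply: agree; rewrite inE negb_or ij.
Qed.

End DecodingChain.

Theorem theorem2 (m n : nat) (S : 'I_n -> {set 'I_m})
  (hR : forall i : 'I_n, request_set S i != set0) :
  forall (F : finFieldType) (l : nat) (phi : ('I_m -> F) -> ('I_l -> F)),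
    is_picod_scheme S phi ->
  forall (L : nat) (Es : nat -> {set {set 'I_m}}),
    nested_collection (picod_edges S) L Es ->
  L <= l.
Proof.
move=> F l phi scheme L Es nestedEs.
have labelled R : R \in picod_edges S ->
    exists2 p, client_edge S p = R & decodes_request S phi p.
  by case/imsetP=> c _ ->; have [j j_req dec_j] := scheme c; exists (c, j).
have [s [<- reqs chain]] := nested_collection_chain nestedEs snd labelled.
rewrite -(size_map snd) -(card_uniqP (decoding_chain_uniq chain reqs)) -cardsE.
rewrite -[l]card_ord; apply: (card_le_of_injective_off (card_finNzRing_gt1 F)).
move=> x y agree; apply: (decoding_chain_agree chain reqs) => k k_s.
by rewrite agree ?inE.
Qed.
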